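(* Let $(V,P)$ be a finite, connected, lazy, reversible Markov chain equipped with the combinatorial distance, and assume every edge has non-negative Ollivier sectional curvature. Then \[ \alpha_{\operatorname{mod}}\ge\inf_{x\sim y}\kappa(x,y). \]
   Context: Lazy means $\sum_yP(x,y)=1$ and $P(x,x)\ge\frac12$; $P$ has symmetric support; $m$ is the probability measure with $m(x)P(x,y)=m(y)P(y,x)$. $x\sim y$ means $x\neq y$ and $P(x,y)>0$; $d$ is the combinatorial (edge-count) distance. $\Delta f(x)=\sum_zP(x,z)(f(z)-f(x))$, $\langle f,g\rangle=\sum f g\, m$, $\mathcal E(f,g)=-\langle\Delta f,g\rangle$. For positive $f$ with $\langle f,1\rangle=1$, $\operatorname{Ent}(f)=\langle f,\log f\rangle$; the modified log-Sobolev constant is $\alpha_{\operatorname{mod}}=\inf\{\mathcal E(f,\log f)/\operatorname{Ent}(f)\}$ over non-constant positive $f$ with $\langle f,1\rangle=1$. Ollivier curvature: $\kappa(x,y)=\inf\{(\Delta f(x)-\Delta f(y))/d(x,y): f\text{ 1-Lipschitz w.r.t. }d,\ f(y)-f(x)=d(x,y)\}$. An edge $x\sim y$ has non-negative Ollivier sectional curvature if there is a coupling $\pi$ of $P(x,\cdot)$ and $P(y,\cdot)$ with $d(x',y')\le1$ whenever $\pi(x',y')>0$. *)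

From HB Require Import structures.
From mathcomp Require Import all_boot all_order all_algebra.
From mathcomp Require Import all_classical all_reals all_analysis.
Set Implicit Arguments. Unset Strict Implicit. Unset Printing Implicit Defensive.
Import Order.TTheory GRing.Theory Num.Theory.
Local Open Scope ring_scope.
Local Open Scope classical_set_scope.

Section MarkovDefs.
Variables (R : realType) (V : finType) (P : V -> V -> R).

Definition adj : rel V := fun x y => (x != y) && (0 < P x y).

Fixpoint within (k : nat) (x y : V) : bool :=
  match k with
  | 0 => x == y
  | k'.+1 => within k' x y || [exists z, within k' x z && adj z y]
  end.

(* combinatorial (edge-count) graph distance; on a connected graph every
   vertex is reached within #|V| - 1 steps, so the search range suffices *)
Definition dist (x y : V) : nat := find (fun k => within k x y) (iota 0 #|V|).

Definition lap (f : V -> R) (x : V) : R := \sum_(z : V) P x z * (f z - f x).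

Definition lip1 (f : V -> R) : Prop :=
  forall x y, `|f x - f y| <= (dist x y)%:R.

Definition kappa (x y : V) : R :=
  inf [set r : R | exists f : V -> R, lip1 f /\ f y - f x = (dist x y)%:R /\
                      r = (lap f x - lap f y) / (dist x y)%:R].

Variable m : V -> R.

Definition inner (f g : V -> R) : R := \sum_(x : V) f x * g x * m x.
Definition energy (f g : V -> R) : R := - inner (lap f) g.
Definition Ent (f : V -> R) : R := inner f (fun x => ln (f x)).

Definition alpha_mod : R :=
  inf [set r : R | exists f : V -> R, (forall x, 0 < f x) /\
         inner f (fun _ => 1) = 1 /\ (exists x y, f x != f y) /\
         r = energy f (fun x => ln (f x)) / Ent f].

Definition nonneg_sectional (x y : V) : Prop :=
  exists pi : V -> V -> R, (forall a b, 0 <= pi a b) /\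
    (forall a, \sum_(b : V) pi a b = P x a) /\
    (forall b, \sum_(a : V) pi a b = P y b) /\
    (forall a b, 0 < pi a b -> (dist a b <= 1)%N).

End MarkovDefs.

(* Fix 0 <= alpha below every edge curvature and minimise
   F(g) = E(g, log g) - alpha Ent(g) over densities bounded below by a small constant.
   If the minimum were negative, the minimiser g is not constant; let x ~ y be an edge
   on which u = log g increases the most, by L > 0.  Moving a little mass from y to x
   and using the convexity of g |-> E(g, log g) and of Ent gives the first-order
   condition  Du(x) - Du(y) + Dg(x)/g(x) - Dg(y)/g(y) <= alpha L  (D the Laplacian).
   Since u / L is 1-Lipschitz, the first difference is at least kappa(x, y) L; a
   coupling of P(x, .) and P(y, .) moving along edges shows that the second is
   non-negative, because u increases by at most L along any edge.  Hence
   kappa(x, y) <= alpha, a contradiction. *)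

From Pilot Require Import Defs.
From mathcomp Require Import all_boot all_order all_algebra.
From mathcomp Require Import all_classical all_reals all_analysis.
From mathcomp Require Import ring lra.
Import Order.TTheory GRing.Theory Num.Theory.
Import numFieldNormedType.Exports.
Set Implicit Arguments. Unset Strict Implicit. Unset Printing Implicit Defensive.
Local Open Scope ring_scope.
Local Open Scope classical_set_scope.

Section Graph.
Variables (R : realType) (V : finType) (P : V -> V -> R).
Hypothesis P_symsupp : forall x y, 0 < P x y -> 0 < P y x.

Lemma adj_sym x y : adj P x y -> adj P y x.
Proof. by rewrite /adj => /andP[xy /P_symsupp ->]; rewrite eq_sym xy. Qed.

Lemma within_dist a b : Defs.within P (dist P a b) a b \/ dist P a b = #|V|.
Proof.
rewrite /dist; have [H|H] := boolP (has (fun k => Defs.within P k a b) (iota 0 #|V|)).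
  left; have := nth_find 0%N H; rewrite nth_iota ?add0n //.
  by move: H; rewrite has_find size_iota.
by right; rewrite hasNfind // size_iota.
Qed.

Lemma dist_le_card a b : (dist P a b <= #|V|)%N.
Proof. by rewrite /dist -{2}(size_iota 0 #|V|) find_size. Qed.

Lemma dist_adj x y : adj P x y -> dist P x y = 1%N.
Proof.
move=> /[dup] xy /andP[neq_xy _].
have : (1 < #|V|)%N.
  by have := max_card (mem [:: x; y]); rewrite (card_uniqP _) //= inE neq_xy.
rewrite /dist; case: #|V| => [|[|n]] //= _.
rewrite (negbTE neq_xy) /=.
suff -> : [exists z, (x == z) && adj P z y] by [].
by apply/existsP; exists x; rewrite eqxx.
Qed.

Lemma dist_le1 a b : (dist P a b <= 1)%N -> a = b \/ adj P a b.
Proof.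
have [|->] := within_dist a b.
  case: (dist P a b) => [|[|k]] //= + _; first by move/eqP; left.
  by case/orP => [/eqP|/existsP[z /andP[/eqP <- ab]]]; [left | right].
by move/card_le1_eqP => eq_all; left; apply: eq_all.
Qed.

Hypothesis conn : forall x y, connect (adj P) x y.

Section EdgeBound.
Variables (w : V -> R) (L : R).
Hypothesis L_ge0 : 0 <= L.
Hypothesis edge_le : forall a b, adj P a b -> w b - w a <= L.

Lemma edge_normB_le a b : adj P a b -> `|w a - w b| <= L.
Proof.
move=> ab; rewrite ler_norml -lerNl opprB !edge_le //; exact: adj_sym.
Qed.

Lemma within_normB_le k a b : Defs.within P k a b -> `|w a - w b| <= k%:R * L.
Proof.
elim: k b => [|k IH] b /=; first by move/eqP->; rewrite subrr normr0 mul0r.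
case/orP => [/IH|/existsP[z /andP[/IH az /edge_normB_le zb]]].
  by move/le_trans; apply; rewrite ler_wpM2r // ler_nat.
rewrite -(subrKA (w z)) (le_trans (ler_normD _ _)) // mulrSr mulrDl mul1r.
exact: lerD.
Qed.

Lemma path_normB_le a p : path (adj P) a p -> `|w a - w (last a p)| <= (size p)%:R * L.
Proof.
elim: p a => [|b p IH] a /=; first by rewrite subrr normr0 mul0r.
case/andP => /edge_normB_le ab /IH h.
rewrite -(subrKA (w b)) (le_trans (ler_normD _ _)) // mulrS mulrDl mul1r.
exact: lerD.
Qed.

Lemma dist_normB_le a b : `|w a - w b| <= (dist P a b)%:R * L.
Proof.
have [/within_normB_le //|->] := within_dist a b.
have /connectP[p pth ->] := conn a b.
have [p' pth' uniq_p' _] := shortenP pth.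
apply: le_trans (path_normB_le pth') _; rewrite ler_wpM2r // ler_nat.
by have := max_card (mem (a :: p')); rewrite (card_uniqP uniq_p') => /ltnW.
Qed.

End EdgeBound.

Lemma edge_nonincreasing_const (w : V -> R) :
  (forall a b, adj P a b -> w b - w a <= 0) -> forall a b, w a = w b.
Proof.
move=> edge_le a b; apply/eqP; rewrite -subr_eq0 -normr_le0.
by rewrite -(mulr0 ((dist P a b)%:R : R)) dist_normB_le.
Qed.

Lemma steepest_edge (w : V -> R) a b : adj P a b ->
  exists x y, adj P x y /\ forall a' b', adj P a' b' -> w b' - w a' <= w y - w x.
Proof.
move=> ab; have [[x y] /= xy steep] :=
  @arg_maxP _ _ _ (a, b) (fun p : V * V => adj P p.1 p.2) (fun p => w p.2 - w p.1) ab.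
by exists x, y; split=> // a' b' a'b'; apply: (steep (a', b')).
Qed.

End Graph.

Section LogInequalities.
Variable R : realType.
Implicit Types a b p q : R.

Lemma subr_le_mul_lnB p q : 0 < p -> 0 < q -> p - q <= p * (ln p - ln q).
Proof.
move=> p0 q0; have qp : q / p * p = q by rewrite mulfVK // gt_eqF.
have : ln q - ln p <= q / p - 1.
  rewrite -ln_div ?posrE // -[X in ln X](subrK 1) [_ + 1]addrC le_ln1Dx //.
  by rewrite ltrBrDl subrr divr_gt0.
nra.
Qed.

Lemma subr_lt_mul_lnB p q : 0 < p -> 0 < q -> p != q -> p - q < p * (ln p - ln q).
Proof.
move=> p0 q0 pq; have qp : q / p * p = q by rewrite mulfVK // gt_eqF.
have : 1 + (ln q - ln p) < q / p.
  rewrite -ln_div ?posrE // -[X in _ < X]lnK ?posrE ?divr_gt0 // expR_gt1Dx //.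
  by rewrite ln_div ?posrE // subr_eq0; apply: contra_neq pq => /ln_inj ->; rewrite ?posrE.
nra.
Qed.

Definition phi a b := (b - a) * (ln b - ln a).

Definition phi_da a b := ln a - ln b - (b - a) / a.

Lemma phi_ge0 a b : 0 < a -> 0 < b -> 0 <= phi a b.
Proof.
move=> a0 b0; rewrite /phi; have [ab|ba] := lerP a b.
  by apply: mulr_ge0; rewrite subr_ge0 // ler_ln ?posrE.
by apply: mulr_le0; rewrite subr_le0 ?ler_ln ?posrE // ltW.
Qed.

Lemma phi_tangent a b a' b' : 0 < a -> 0 < b -> 0 < a' -> 0 < b' ->
  phi_da a' b' * (a - a') + phi_da b' a' * (b - b') <= phi a b - phi a' b'.
Proof.
move=> a0 b0 a'0 b'0.
have := subr_le_mul_lnB a0 (mulr_gt0 b0 (divr_gt0 a'0 b'0)).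
have := subr_le_mul_lnB b0 (mulr_gt0 a0 (divr_gt0 b'0 a'0)).
have lnMdiv c d e : 0 < c -> 0 < d -> 0 < e -> ln (c * (d / e)) = ln c + ln d - ln e.
  by move=> c0 d0 e0; rewrite lnM ?ln_div ?posrE ?divr_gt0 // addrA.
rewrite !lnMdiv //.
have ta : (b' - a') / a' * (a - a') = a * (b' / a') - b' - a + a'.
  by field; rewrite gt_eqF.
have tb : (a' - b') / b' * (b - b') = b * (a' / b') - a' - b + b'.
  by field; rewrite gt_eqF.
rewrite /phi_da /phi; lra.
Qed.

End LogInequalities.

Section DirichletForm.
Variables (R : realType) (V : finType) (P : V -> V -> R) (m : V -> R).
Hypothesis P_ge0 : forall x y, 0 <= P x y.
Hypothesis m_ge0 : forall x, 0 <= m x.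
Hypothesis m_rev : forall x y, m x * P x y = m y * P y x.

Lemma sum_reversibleC (F : V -> V -> R) :
  \sum_z \sum_y m z * P z y * F z y = \sum_z \sum_y m z * P z y * F y z.
Proof.
rewrite exchange_big; apply: eq_bigr => z _; apply: eq_bigr => y _ /=.
by rewrite m_rev.
Qed.

Lemma energy_edgeE g w : energy P m g w =
  2^-1 * \sum_z \sum_y m z * P z y * ((g y - g z) * (w y - w z)).
Proof.
set S := \sum_z \sum_y m z * P z y * ((g y - g z) * w z).
have -> : energy P m g w = - S.
  rewrite /energy /inner /lap; congr (- _); apply: eq_bigr => x _.
  rewrite !big_distrl; apply: eq_bigr => z _ /=; ring.
have -> : \sum_z \sum_y m z * P z y * ((g y - g z) * (w y - w z)) =
          \sum_z \sum_y m z * P z y * ((g y - g z) * w y) - S.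
  rewrite -sumrB; apply: eq_bigr => x _; rewrite -sumrB; apply: eq_bigr => z _; ring.
have -> : \sum_z \sum_y m z * P z y * ((g y - g z) * w y) = - S.
  rewrite (sum_reversibleC (fun a b => (g b - g a) * w b)) /S -sumrN.
  apply: eq_bigr => x _; rewrite -sumrN; apply: eq_bigr => z _; ring.
by field.
Qed.

Lemma energy_ln_ge0 g : (forall z, 0 < g z) -> 0 <= energy P m g (fun z => ln (g z)).
Proof.
move=> g_gt0; rewrite energy_edgeE mulr_ge0 ?invr_ge0 //.
apply: sumr_ge0 => z _; apply: sumr_ge0 => y _.
by apply: mulr_ge0; [exact: mulr_ge0 | exact: phi_ge0].
Qed.

(* [- m z * energy_slope g z] is the partial derivative of [g |-> energy P m g (ln o g)]
   in the coordinate [z]. *)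
Definition energy_slope (g : V -> R) z := lap P (fun z => ln (g z)) z + lap P g z / g z.

Lemma sum_phi_da g z : 0 < g z ->
  \sum_y P z y * phi_da (g z) (g y) = - energy_slope g z.
Proof.
move=> gz; rewrite /energy_slope /lap big_distrl -big_split -sumrN.
by apply: eq_bigr => y _ /=; rewrite /phi_da; field; rewrite gt_eqF.
Qed.

Lemma energy_ln_convex g g' : (forall z, 0 < g z) -> (forall z, 0 < g' z) ->
  energy P m g' (fun z => ln (g' z)) - energy P m g (fun z => ln (g z)) <=
  \sum_z m z * (g z - g' z) * energy_slope g' z.
Proof.
move=> g_gt0 g'_gt0; rewrite !energy_edgeE -mulrBr.
set C := \sum_z \sum_y m z * P z y * (phi_da (g' z) (g' y) * (g z - g' z)).
have -> : \sum_z m z * (g z - g' z) * energy_slope g' z = - C.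
  rewrite /C -sumrN; apply: eq_bigr => z _.
  rewrite -[energy_slope g' z]opprK -sum_phi_da // mulrN mulr_sumr; congr (- _).
  by apply: eq_bigr => y _; ring.
have : C + C <= \sum_z \sum_y m z * P z y * phi (g z) (g y) -
                \sum_z \sum_y m z * P z y * phi (g' z) (g' y).
  rewrite {2}/C (sum_reversibleC (fun a b => phi_da (g' a) (g' b) * (g a - g' a))) /=.
  rewrite /C -!sumrB -big_split /=; apply: ler_sum => z _.
  rewrite -!sumrB -big_split /=; apply: ler_sum => y _.
  rewrite -!mulrBr -mulrDr; apply: ler_wpM2l; first exact: mulr_ge0.
  exact: phi_tangent.
rewrite /phi /=; lra.
Qed.

Lemma Ent_convex g g' : (forall z, 0 < g z) -> (forall z, 0 < g' z) ->
  \sum_z m z * (g' z - g z) * (ln (g z) + 1) <= Ent m g' - Ent m g.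
Proof.
move=> g_gt0 g'_gt0; rewrite /Ent /inner -sumrB; apply: ler_sum => z _.
have := subr_le_mul_lnB (g'_gt0 z) (g_gt0 z); have := m_ge0 z; nra.
Qed.

Definition mlsi_defect (al : R) (g : V -> R) := energy P m g (fun z => ln (g z)) - al * Ent m g.

End DirichletForm.

Section Continuity.
Variables (R : realType) (V : finType) (P : V -> V -> R) (m : V -> R).
Variables (T : Type) (F : set_system T).
Hypothesis F_filter : Filter F.

Lemma cvg_wsum (c : V -> R) (H : T -> V -> R) h :
  (forall z, H t z @[t --> F] --> h z) ->
  \sum_z c z * H t z @[t --> F] --> \sum_z c z * h z.
Proof.
move=> H_cvg; apply: cvg_big => [|z _]; first exact: add_continuous.
by apply: cvgM; [exact: cvg_cst | exact: H_cvg].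
Qed.

Lemma cvg_lap (H : T -> V -> R) h : (forall z, H t z @[t --> F] --> h z) ->
  forall x, lap P (H t) x @[t --> F] --> lap P h x.
Proof.
move=> H_cvg x; apply: cvg_big => [|z _]; first exact: add_continuous.
by apply: cvgM; [exact: cvg_cst | apply: cvgB].
Qed.

Variables (G : T -> V -> R) (g : V -> R).
Hypothesis G_cvg : forall z, G t z @[t --> F] --> g z.
Hypothesis g_gt0 : forall z, 0 < g z.

Lemma cvg_ln_comp z : ln (G t z) @[t --> F] --> ln (g z).
Proof. exact: cvg_comp _ _ (@G_cvg z) (continuous_ln (@g_gt0 z)). Qed.

Lemma cvg_energy_slope x : energy_slope P (G t) x @[t --> F] --> energy_slope P g x.
Proof.
apply: cvgD; first exact: (cvg_lap cvg_ln_comp).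
apply: cvgM; first exact: cvg_lap.
by apply: cvgV; [rewrite gt_eqF | exact: G_cvg].
Qed.

Lemma cvg_mlsi_defect al : mlsi_defect P m al (G t) @[t --> F] --> mlsi_defect P m al g.
Proof.
apply: cvgB; last (apply: cvgM; first exact: cvg_cst); first apply: cvgN.
- apply: cvg_big => [|z _]; first exact: add_continuous.
  apply: cvgM; last exact: cvg_cst.
  by apply: cvgM; [exact: cvg_lap | exact: cvg_ln_comp].
- apply: cvg_big => [|z _]; first exact: add_continuous.
  apply: cvgM; last exact: cvg_cst.
  by apply: cvgM; [exact: G_cvg | exact: cvg_ln_comp].
Qed.

End Continuity.

Section MLSI.
Variables (R : realType) (V : finType) (P : V -> V -> R) (m : V -> R).
Hypothesis P_ge0 : forall x y, 0 <= P x y.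
Hypothesis P_stoch : forall x, \sum_(y : V) P x y = 1.
Hypothesis P_symsupp : forall x y, 0 < P x y -> 0 < P y x.
Hypothesis m_ge0 : forall x, 0 <= m x.
Hypothesis m_sum : \sum_(x : V) m x = 1.
Hypothesis m_rev : forall x y, m x * P x y = m y * P y x.
Hypothesis conn : forall x y, connect (adj P) x y.
Hypothesis sect : forall x y, adj P x y -> nonneg_sectional P x y.

Lemma m_gt0 x : 0 < m x.
Proof.
rewrite lt_neqAle m_ge0 andbT; apply/negP => /eqP m0.
have adj_csym : connect_sym (adj P).
  by apply: sym_connect_sym => a b; apply/idP/idP; apply: adj_sym.
have m0_closed : fingraph.closed (adj P) [pred z | m z == 0].
  apply: (intro_closed adj_csym) => a b /andP[_ /P_symsupp Pba]; rewrite !inE => /eqP ma.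
  have : m b * P b a = 0 by rewrite -m_rev ma mul0r.
  by move/eqP; rewrite mulf_eq0 (gt_eqF Pba) orbF.
have m_eq0 y : m y = 0.
  apply/eqP; have := closed_connect m0_closed (conn x y).
  by rewrite !inE m0 eqxx => <-.
by move: m_sum; rewrite big1 // => /esym/eqP; rewrite oner_eq0.
Qed.

Lemma inner1E f : inner m f (fun _ => 1) = \sum_z m z * f z.
Proof. by apply: eq_bigr => z _; rewrite mulr1 mulrC. Qed.

Lemma Ent_gt0 f : (forall z, 0 < f z) -> \sum_z m z * f z = 1 ->
  (exists x y, f x != f y) -> 0 < Ent m f.
Proof.
move=> f_gt0 f1 [x [y fxy]].
have [z fz] : exists z, f z != 1.
  by case: (eqVneq (f x) 1) => [fx1|]; [exists y; rewrite -fx1 eq_sym | exists x].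
have <- : \sum_w m w * (f w - 1) = 0.
  by rewrite (eq_bigr (fun w => m w * f w - m w)) => [|w _]; [rewrite sumrB f1 m_sum subrr | ring].
rewrite /Ent /inner (bigD1 z) //= [X in _ < X](bigD1 z) //=.
apply: ltr_leD.
  have := subr_lt_mul_lnB (f_gt0 z) ltr01 fz; have := m_gt0 z; rewrite ln1 subr0; nra.
apply: ler_sum => w _; have := subr_le_mul_lnB (f_gt0 w) ltr01.
have := m_ge0 w; rewrite ln1 subr0; nra.
Qed.

Lemma kappa_le_lap x y g : adj P x y -> lip1 P g -> g y - g x = 1 ->
  kappa P x y <= lap P g x - lap P g y.
Proof.
move=> xy g_lip gxy; have d1 : (dist P x y)%:R = 1 :> R by rewrite dist_adj.
have lap_le f : lip1 P f -> forall z, `|lap P f z| <= #|V|%:R.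
  move=> f_lip z; rewrite (le_trans (ler_norm_sum _ _ _)) //.
  apply: le_trans (_ : \sum_w P z w * #|V|%:R <= _); last first.
    by rewrite -big_distrl /= P_stoch mul1r.
  apply: ler_sum => w _; rewrite normrM ger0_norm // ler_wpM2l //.
  by rewrite distrC (le_trans (f_lip _ _)) // ler_nat dist_le_card.
apply: ge_inf; last by exists g; rewrite gxy d1 divr1.
exists (- (#|V|%:R + #|V|%:R)) => r [f [f_lip [_ ->]]]; rewrite d1 divr1.
have := lap_le f f_lip x; have := lap_le f f_lip y.
rewrite !ler_norml => /andP[? ?] /andP[? ?]; lra.
Qed.

Definition kappa_min := inf [set r : R | exists x y, adj P x y /\ r = kappa P x y].

Lemma kappa_min_le x y : adj P x y -> kappa_min <= kappa P x y.
Proof.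
move=> xy; apply: ge_inf; last by exists x, y.
exists (- \sum_a \sum_b `|kappa P a b|) => _ [a [b [_ ->]]].
have : `|kappa P a b| <= \sum_a' \sum_b' `|kappa P a' b'|.
  rewrite (bigD1 a) //= (bigD1 b) //= -addrA lerDl.
  by rewrite addr_ge0 ?sumr_ge0 // => *; rewrite sumr_ge0.
by rewrite ler_norml lerNl => /andP[].
Qed.

Lemma lap_ratio_le g x y : adj P x y -> (forall z, 0 < g z) ->
  (forall a b, adj P a b -> ln (g b) - ln (g a) <= ln (g y) - ln (g x)) ->
  lap P g y / g y <= lap P g x / g x.
Proof.
move=> xy g_gt0 steep; have [pi [pi_ge0 [pi_x [pi_y pi_dist]]]] := sect xy.
have ratioE z : lap P g z / g z = \sum_a P z a * (g a / g z) - 1.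
  rewrite /lap big_distrl -[1](P_stoch z) -sumrB.
  by apply: eq_bigr => a _ /=; field; rewrite gt_eqF.
rewrite !ratioE lerD2r.
have -> : \sum_a P x a * (g a / g x) = \sum_a \sum_b pi a b * (g a / g x).
  by apply: eq_bigr => a _; rewrite -pi_x big_distrl.
have -> : \sum_b P y b * (g b / g y) = \sum_a \sum_b pi a b * (g b / g y).
  by rewrite exchange_big; apply: eq_bigr => b _; rewrite -pi_y big_distrl.
apply: ler_sum => a _; apply: ler_sum => b _.
have [->|pi_neq0] := eqVneq (pi a b) 0; first by rewrite !mul0r.
have divE c d : 0 < c -> 0 < d -> c / d = expR (ln c - ln d).
  by move=> c0 d0; rewrite -ln_div ?posrE // lnK // posrE divr_gt0.
rewrite ler_wpM2l // !divE // ler_expR.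
have := steep _ _ (adj_sym P_symsupp xy).
have pi_gt0 : 0 < pi a b by rewrite lt_neqAle eq_sym pi_neq0 pi_ge0.
have [<-|ab] := dist_le1 (pi_dist a b pi_gt0); first lra.
by have := steep _ _ ab; lra.
Qed.

Lemma lap_divr w c z : lap P (fun a => w a / c) z = lap P w z / c.
Proof. by rewrite /lap big_distrl; apply: eq_bigr => a _ /=; rewrite -mulrBl mulrA. Qed.

Lemma kappa_mul_le_slope g x y : adj P x y -> (forall z, 0 < g z) ->
  (forall a b, adj P a b -> ln (g b) - ln (g a) <= ln (g y) - ln (g x)) ->
  0 < ln (g y) - ln (g x) ->
  kappa P x y * (ln (g y) - ln (g x)) <= energy_slope P g x - energy_slope P g y.
Proof.
move=> xy g_gt0 steep; set L := ln (g y) - ln (g x) => L_gt0.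
pose u z := ln (g z) / L.
have u_lip : lip1 P u.
  move=> a b; rewrite /u -mulrBl normrM [`|L^-1|]gtr0_norm ?invr_gt0 // ler_pdivrMr //.
  exact: (dist_normB_le P_symsupp conn (ltW L_gt0) steep).
have uxy : u y - u x = 1 by rewrite /u -mulrBl mulfV // gt_eqF.
have := kappa_le_lap xy u_lip uxy; rewrite !lap_divr -mulrBl ler_pdivlMr // => kL.
apply: (le_trans kL); rewrite /energy_slope opprD addrACA lerDl subr_ge0.
exact: lap_ratio_le.
Qed.

Lemma edge_ln_increase g : (forall z, 0 < g z) -> \sum_z m z * g z = 1 ->
  (exists z, g z != 1) -> exists a b, adj P a b /\ ln (g a) < ln (g b).
Proof.
move=> g_gt0 g1 [z gz]; apply/not_existsP => no_incr; apply/negP: gz; apply/negPn/eqP.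
have ln_const : forall a b, ln (g a) = ln (g b).
  apply: (edge_nonincreasing_const P_symsupp conn) => a b ab.
  by rewrite subr_le0 leNgt; apply/negP => lt; apply: (no_incr a); exists b.
have g_const a b : g a = g b by apply: ln_inj; rewrite ?posrE ?ln_const.
rewrite -g1 (eq_bigr (fun w => m w * g z)) => [|w _]; last by rewrite (g_const w z).
by rewrite -big_distrl /= m_sum mul1r.
Qed.

Definition transfer (x y z : V) : R := ((z == x)%:R - (z == y)%:R) / m z.

Lemma sum_transfer x y (c : V -> R) : \sum_z m z * transfer x y z * c z = c x - c y.
Proof.
have delta a : \sum_z (z == a)%:R * c z = c a.
  by rewrite (bigD1 a) //= eqxx mul1r big1 ?addr0 // => z /negbTE ->; rewrite mul0r.
rewrite -delta -(delta y) -sumrB; apply: eq_bigr => z _.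
by rewrite /transfer; field; rewrite gt_eqF ?m_gt0.
Qed.

Definition densities_above (dl : R) :=
  [set g : V -> R | (forall z, dl <= g z) /\ \sum_z m z * g z = 1].

Lemma transfer_densities_above dl g x y t : densities_above dl g ->
  0 <= t -> t <= m y * (g y - dl) -> densities_above dl (fun z => g z + t * transfer x y z).
Proof.
move=> [g_ge g1] t_ge0 t_le; split => [z|]; last first.
  rewrite (eq_bigr (fun z => m z * g z + t * (m z * transfer x y z * 1))) => [|z _]; last by ring.
  by rewrite big_split /= g1 -mulr_sumr sum_transfer subrr mulr0 addr0.
rewrite /transfer; have [->|_] := eqVneq z y.
  have : t / m y <= g y - dl by rewrite ler_pdivrMr ?m_gt0 // mulrC.
  case: (y == x); rewrite ?subrr ?mul0r ?mulr0 ?addr0 ?g_ge //=.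
  rewrite sub0r mulNr mulrN mul1r; lra.
by rewrite subr0 -[dl]addr0 lerD ?g_ge // mulr_ge0 ?divr_ge0 ?ler0n ?m_ge0.
Qed.

Lemma density_lower_bound (f : V -> R) : (forall z, 0 < f z) ->
  exists2 dl, 0 < dl & forall z, dl <= f z.
Proof.
move=> f_gt0; have S_ge0 : 0 <= \sum_z (f z)^-1.
  by apply: sumr_ge0 => z _; rewrite invr_ge0 ltW.
exists (1 + \sum_z (f z)^-1)^-1 => [|z]; first by rewrite invr_gt0; lra.
rewrite -[f z]invrK lef_pV2 ?posrE ?invr_gt0 //; last lra.
rewrite (bigD1 z) //= addrCA lerDl addr_ge0 // sumr_ge0 // => w _.
by rewrite invr_ge0 ltW.
Qed.

Import ArrowAsProduct.

Lemma compact_densities_above dl : 0 <= dl -> compact (densities_above dl).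
Proof.
move=> dl_ge0.
pose B := [set g : V -> R | forall z, `[dl, (m z)^-1] (g z)].
pose C := [set g : V -> R | \sum_z m z * g z = 1].
have -> : densities_above dl = B `&` C.
  apply/seteqP; split => g [g_ge g1]; split => // z.
    have mz := m_gt0 z.
    change (g z \in `[dl, (m z)^-1]%R); rewrite in_itv /= g_ge /=.
    rewrite -(ler_pM2l mz) mulfV ?gt_eqF // -g1 (bigD1 z) //= lerDl.
    by apply: sumr_ge0 => w _; rewrite mulr_ge0 // (le_trans dl_ge0).
  by have := g_ge z; change (g z \in `[dl, (m z)^-1]%R -> dl <= g z); rewrite in_itv /= => /andP[].
apply: compact_closedI.
  exact: (@tychonoff V (fun _ => R) (fun z => `[dl, (m z)^-1])
           (fun z => @segment_compact R dl (m z)^-1)).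
have -> : C = (fun g : V -> R => \sum_z m z * g z) @^-1` [set x | x = 1] by [].
apply: preimage_closed => [g _|]; last exact: closed_eq.
exact: (@cvg_wsum R V (V -> R) (nbhs g) _ m id g (fun z => @proj_continuous V (fun _ => R) z g)).
Qed.

Lemma mlsi_defect_has_min al dl : 0 < dl -> densities_above dl !=set0 ->
  exists2 g, densities_above dl g &
    forall g', densities_above dl g' -> mlsi_defect P m al g <= mlsi_defect P m al g'.
Proof.
move=> dl_gt0 ne; have cpt := compact_densities_above (ltW dl_gt0).
have cont : {within densities_above dl, continuous (mlsi_defect P m al)}.
  apply: continuous_in_subspaceT => g /set_mem [g_ge _].
  have g_gt0 z : 0 < g z := lt_le_trans dl_gt0 (g_ge z).
  exact: (@cvg_mlsi_defect R V P m _ (nbhs g) _ id g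
            (fun z => @proj_continuous V (fun _ => R) z g) g_gt0 al).
have [g /set_mem g_in g_min] := compact_EVT_min ne cpt cont.
by exists g => // g' /mem_set; apply: g_min.
Qed.

Lemma transfer_variation_le al g g' t x y : 0 <= al -> 0 < t ->
  (forall z, 0 < g z) -> (forall z, 0 < g' z) ->
  (forall z, g' z = g z + t * transfer x y z) ->
  mlsi_defect P m al g <= mlsi_defect P m al g' ->
  energy_slope P g' x - energy_slope P g' y <= al * (ln (g y) - ln (g x)).
Proof.
move=> al_ge0 t_gt0 g_gt0 g'_gt0 g'E; rewrite /mlsi_defect => g_le; rewrite -(ler_pM2l t_gt0).
have dev c : \sum_z m z * (g' z - g z) * c z = t * (c x - c y).
  by rewrite -sum_transfer mulr_sumr; apply: eq_bigr => z _; rewrite g'E; ring.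
have := energy_ln_convex P_ge0 m_ge0 m_rev g_gt0 g'_gt0.
have -> : \sum_z m z * (g z - g' z) * energy_slope P g' z =
          - (t * (energy_slope P g' x - energy_slope P g' y)).
  by rewrite -dev -sumrN; apply: eq_bigr => z _; ring.
have := Ent_convex m_ge0 g_gt0 g'_gt0; rewrite dev /= => /(ler_wpM2l al_ge0).
lra.
Qed.

Lemma mlsi_defect_min_slope al dl g x y : 0 <= al -> 0 < dl ->
  densities_above dl g -> dl < g y ->
  (forall g', densities_above dl g' -> mlsi_defect P m al g <= mlsi_defect P m al g') ->
  energy_slope P g x - energy_slope P g y <= al * (ln (g y) - ln (g x)).
Proof.
move=> al_ge0 dl_gt0 g_in gy_gt g_min.
have g_gt0 z : 0 < g z := lt_le_trans dl_gt0 (g_in.1 z).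
pose G t z := g z + t * transfer x y z.
have slope_le t : 0 < t -> t < m y * (g y - dl) ->
    energy_slope P (G t) x - energy_slope P (G t) y <= al * (ln (g y) - ln (g x)).
  move=> t_gt0 t_lt; have G_in := transfer_densities_above x g_in (ltW t_gt0) (ltW t_lt).
  apply: (transfer_variation_le al_ge0 t_gt0 g_gt0 _ (fun z => erefl)); last exact: g_min.
  by move=> z; apply: lt_le_trans dl_gt0 (G_in.1 z).
have G_cvg z : G t z @[t --> 0^'+] --> g z.
  apply: cvg_at_right_filter.
  suff : G t z @[t --> 0] --> g z + 0 * transfer x y z by rewrite mul0r addr0.
  by apply: cvgD; [exact: cvg_cst | apply: cvgMr_tmp; exact: cvg_id].
have slope_cvg : energy_slope P (G t) x - energy_slope P (G t) y @[t --> 0^'+] -->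
                 energy_slope P g x - energy_slope P g y.
  by apply: cvgB; apply: (@cvg_energy_slope R V P _ (0^'+) _ G g G_cvg g_gt0).
have slope_near : \forall t \near 0^'+,
    energy_slope P (G t) x - energy_slope P (G t) y <= al * (ln (g y) - ln (g x)).
  near=> t; apply: slope_le; near: t; first exact: nbhs_right_gt.
  by apply: nbhs_right_lt; rewrite mulr_gt0 ?m_gt0 ?subr_gt0.
exact: (closed_cvg _ (@closed_le R _) slope_near _ slope_cvg).
Unshelve. all: by end_near.
Qed.

Lemma mlsi_defect_ge0 al f : 0 <= al -> al < kappa_min ->
  (forall z, 0 < f z) -> \sum_z m z * f z = 1 -> 0 <= mlsi_defect P m al f.
Proof.
move=> al_ge0 al_lt f_gt0 f1; rewrite leNgt; apply/negP => f_lt0.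
have [dl dl_gt0 f_ge] := density_lower_bound f_gt0.
have f_in : densities_above dl f by [].
have [g g_in g_min] := mlsi_defect_has_min al dl_gt0 (ex_intro _ f f_in).
have g_gt0 z : 0 < g z := lt_le_trans dl_gt0 (g_in.1 z).
have g_lt0 : mlsi_defect P m al g < 0 := le_lt_trans (g_min f f_in) f_lt0.
have [g_neq1|g_eq1] := pselect (exists z, g z != 1); last first.
  have ln_g0 z : ln (g z) = 0.
    by case: (eqVneq (g z) 1) => [->|gz]; [rewrite ln1 | case: g_eq1; exists z].
  have E0 : energy P m g (fun z => ln (g z)) = 0.
    by rewrite /energy /inner big1 ?oppr0 // => z _; rewrite ln_g0 mulr0 mul0r.
  have N0 : Ent m g = 0 by rewrite /Ent /inner big1 // => z _; rewrite ln_g0 mulr0 mul0r.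
  by move: g_lt0; rewrite /mlsi_defect E0 N0 mulr0 subr0 ltxx.
have [a [b [ab ln_ab]]] := edge_ln_increase g_gt0 g_in.2 g_neq1.
have [x [y [xy steep]]] := steepest_edge (fun z => ln (g z)) ab.
have L_gt0 : 0 < ln (g y) - ln (g x) by have := steep _ _ ab; lra.
have gx_lt_gy : g x < g y by rewrite -ltr_ln ?posrE // -subr_gt0.
have := kappa_mul_le_slope xy g_gt0 steep L_gt0.
have := mlsi_defect_min_slope x al_ge0 dl_gt0 g_in (le_lt_trans (g_in.1 x) gx_lt_gy) g_min.
have := lt_le_trans al_lt (kappa_min_le xy).
nra.
Qed.

Lemma kappa_min_le_mlsi_ratio f : (forall z, 0 < f z) -> inner m f (fun _ => 1) = 1 ->
  (exists x y, f x != f y) -> kappa_min <= energy P m f (fun z => ln (f z)) / Ent m f.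
Proof.
move=> f_gt0; rewrite inner1E => f1 f_nonconst.
have Ent_pos := Ent_gt0 f_gt0 f1 f_nonconst.
have E_ge0 := energy_ln_ge0 P_ge0 m_ge0 m_rev f_gt0.
set q := _ / _; have q_ge0 : 0 <= q by rewrite divr_ge0 // ltW.
rewrite leNgt; apply/negP => q_lt.
have al_ge0 : 0 <= (q + kappa_min) / 2 by lra.
have al_lt : (q + kappa_min) / 2 < kappa_min by lra.
have := mlsi_defect_ge0 al_ge0 al_lt f_gt0 f1.
rewrite /mlsi_defect subr_ge0 -ler_pdivlMr // -/q; lra.
Qed.

Lemma exists_nonconst_density x y : x != y ->
  exists f : V -> R, [/\ forall z, 0 < f z, inner m f (fun _ => 1) = 1 & f x != f y].
Proof.
move=> xy; have mx := m_gt0 x.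
exists (fun z => (if z == x then 2 else 1) / (1 + m x)); split.
- by move=> z; rewrite divr_gt0 //; [case: ifP | lra].
- rewrite inner1E (eq_bigr (fun z => (m z + (if z == x then m z else 0)) / (1 + m x))).
    by rewrite -big_distrl /= big_split /= m_sum -big_mkcond big_pred1_eq mulfV //; lra.
  by move=> z _; case: ifP => _; ring.
- rewrite eqxx [y == x]eq_sym (negbTE xy); apply/negP => /eqP.
  by move/(congr1 (fun t => t * (1 + m x))); rewrite !mulfVK //; lra.
Qed.

End MLSI.

Unset Implicit Arguments.

Theorem theorem4p4 (R : realType) (V : finType) (P : V -> V -> R) (m : V -> R)
  (P_ge0 : forall x y, 0 <= P x y)
  (P_stoch : forall x, \sum_(y : V) P x y = 1)
  (P_lazy : forall x, 2^-1 <= P x x)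
  (P_symsupp : forall x y, 0 < P x y -> 0 < P y x)
  (m_ge0 : forall x, 0 <= m x)
  (m_sum : \sum_(x : V) m x = 1)
  (m_rev : forall x y, m x * P x y = m y * P y x)
  (conn : forall x y, connect (adj P) x y)
  (sect : forall x y, adj P x y -> nonneg_sectional P x y) :
  inf [set r : R | exists x y, adj P x y /\ r = kappa P x y]
    <= alpha_mod P m.
Proof.
change (kappa_min P <= alpha_mod P m); rewrite /alpha_mod.
set ratios := (X in _ <= inf X).
have kappa_min_le r : ratios r -> kappa_min P <= r.
  case=> f [f_gt0 [f1 [f_nonconst ->]]].
  exact: (kappa_min_le_mlsi_ratio P_ge0 P_stoch P_symsupp m_ge0 m_sum m_rev conn sect).
have [ratios_ne|ratios0] := pselect (ratios !=set0); first exact: lb_le_inf.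
have no_edge x y : ~ adj P x y.
  move=> /andP[xy _]; apply: ratios0.
  have [f [f_gt0 f1 fxy]] := exists_nonconst_density P_symsupp m_ge0 m_sum m_rev conn xy.
  exists (energy P m f (fun z => ln (f z)) / Ent m f), f.
  by split=> //; split=> //; split=> //; exists x, y.
rewrite /kappa_min.
have -> : [set r : R | exists x y, adj P x y /\ r = kappa P x y] = set0.
  by apply/seteqP; split => // r [x [y [/no_edge]]].
have -> : ratios = set0 by apply/seteqP; split => // r ratio_r; apply: ratios0; exists r.
by rewrite inf0.
Qed.
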